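(* There is a constant $k>0$ such that for infinitely many primes $q$, every first-order sentence $\varphi$ of the ring language $L(+,\times,0,1)$ describing $\mathbb F_q$ satisfies $\log q\le k\,|\varphi|\log|\varphi|$.
   Context: A sentence $\phi$ describes a structure $M$ if $M$ is, up to isomorphism, the unique model of $\phi$. The length $|\phi|$ of a formula is its number of symbols, each variable counting as a single symbol. Here $\log m=\min\{r\in\mathbb N: 2^r\ge m\}$. *)

From HB Require Import structures.
From mathcomp Require Import all_boot all_order all_algebra.
Set Implicit Arguments. Unset Strict Implicit. Unset Printing Implicit Defensive.

Inductive term : Type :=
  | TVar : nat -> term
  | TZero : term
  | TOne : term
  | TAdd : term -> term -> term
  | TMul : term -> term -> term.

Inductive formula : Type :=
  | FEq : term -> term -> formula
  | FNot : formula -> formula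
  | FAnd : formula -> formula -> formula
  | FOr : formula -> formula -> formula
  | FImp : formula -> formula -> formula
  | FEx : nat -> formula -> formula
  | FAll : nat -> formula -> formula.

(* An L-structure: a (nonempty, since it contains zero) carrier with
   interpretations of 0, 1, +, *. No axioms are imposed. *)
Record Lstruct := LStruct {
  carrier :> Type;
  s_zero : carrier;
  s_one : carrier;
  s_add : carrier -> carrier -> carrier;
  s_mul : carrier -> carrier -> carrier }.

Fixpoint teval (M : Lstruct) (e : nat -> M) (t : term) : M :=
  match t with
  | TVar i => e i
  | TZero => @s_zero M
  | TOne => @s_one M
  | TAdd a b => @s_add M (teval e a) (teval e b)
  | TMul a b => @s_mul M (teval e a) (teval e b)
  end.

Definition upd (M : Type) (e : nat -> M) (x : nat) (v : M) : nat -> M :=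
  fun i => if i == x then v else e i.

Fixpoint sat (M : Lstruct) (e : nat -> M) (f : formula) : Prop :=
  match f with
  | FEq a b => teval e a = teval e b
  | FNot g => ~ sat e g
  | FAnd g h => sat e g /\ sat e h
  | FOr g h => sat e g \/ sat e h
  | FImp g h => sat e g -> sat e h
  | FEx x g => exists v : M, sat (upd e x v) g
  | FAll x g => forall v : M, sat (upd e x v) g
  end.

Fixpoint tvars (t : term) : seq nat :=
  match t with
  | TVar i => [:: i]
  | TZero | TOne => [::]
  | TAdd a b | TMul a b => tvars a ++ tvars b
  end.

Fixpoint fvars (f : formula) : seq nat :=
  match f with
  | FEq a b => tvars a ++ tvars b
  | FNot g => fvars g
  | FAnd g h | FOr g h | FImp g h => fvars g ++ fvars h
  | FEx x g | FAll x g => filter (fun i => i != x) (fvars g)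
  end.

Definition sentence (f : formula) : Prop := fvars f = [::].

(* M |= phi for a sentence (environment irrelevant; we use the constant
   environment at 0). *)
Definition models (M : Lstruct) (f : formula) : Prop := sat (fun _ => @s_zero M) f.

Definition Liso (M N : Lstruct) : Prop :=
  exists h : M -> N, bijective h /\
    h (@s_zero M) = @s_zero N /\ h (@s_one M) = @s_one N /\
    (forall x y, h (@s_add M x y) = @s_add N (h x) (h y)) /\
    (forall x y, h (@s_mul M x y) = @s_mul N (h x) (h y)).

Definition describes (f : formula) (M : Lstruct) : Prop :=
  models M f /\ forall N : Lstruct, models N f -> Liso N M.

(* Length: number of symbols (Polish notation); each variable is one symbol,
   a quantifier block "Ex x" counts two symbols. *)
Fixpoint tlen (t : term) : nat :=
  match t with
  | TVar _ | TZero | TOne => 1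
  | TAdd a b | TMul a b => (tlen a + tlen b).+1
  end.

Fixpoint flen (f : formula) : nat :=
  match f with
  | FEq a b => (tlen a + tlen b).+1
  | FNot g => (flen g).+1
  | FAnd g h | FOr g h | FImp g h => (flen g + flen h).+1
  | FEx _ g | FAll _ g => (flen g).+2
  end.

Definition clog (m : nat) : nat := up_log 2 m.

Definition Fq_struct (q : nat) : Lstruct :=
  @LStruct 'F_q 0%R 1%R (fun x y => (x + y)%R) (fun x y => (x * y)%R).

From HB Require Import structures.
From mathcomp Require Import all_boot all_order all_algebra.
From mathcomp Require Import zify.
From Stdlib Require Import Classical ClassicalEpsilon.
Set Implicit Arguments. Unset Strict Implicit. Unset Printing Implicit Defensive.
Import GRing.Theory Num.Theory.

(* Distinct primes q have non-isomorphic fields F_q, so a sentence describes at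
   most one of them.  After renaming its variables to 0, 1, ..., a sentence of
   length at most L = 2^j is a word of length L over 13 + L symbols, so at most
   (13 + L)^L <= 2^w primes, w = L (j + 1), have a description that short.  By
   Chebyshev's bound 2^(m-1) <= m pi(2^m) (from the central binomial coefficient),
   far more than 2^w + N primes lie below 2^(2w).  If every prime q > N had a
   description phi with log q > 2 |phi| log |phi|, then for q <= 2^(2w) this
   would force |phi| <= L, contradicting the count; so k = 2 works. *)

Lemma expn2_leq_bin_double x : 2 ^ x <= 'C(x.*2, x).
Proof.
elim: x => [|x IH] //.
have step : 2 * 'C(x.*2, x) <= 'C(x.+1.*2, x.+1).
  rewrite doubleS; case: x {IH} => [|y] //.
  rewrite !binS doubleS; lia.
by rewrite expnS (leq_trans _ step) // leq_mul2l IH orbT.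
Qed.

Lemma sum_divn_expn_eq0 p n a b : 1 < p -> n < p ^ a ->
  \sum_(a <= k < b) n %/ p ^ k = 0.
Proof.
move=> p_gt1 n_lt; rewrite big_nat_cond big1 // => k /andP[/andP[ak _] _].
by apply/divn_small/(leq_trans n_lt); rewrite leq_pexp2l // ltnW.
Qed.

(* Legendre's formula over a range depending only on the bound [M], so that it
   applies to [x] and [2 x] at once. *)
Lemma logn_fact_trunc p n M : prime p -> n <= M ->
  logn p n`! = \sum_(1 <= k < (trunc_log p M).+1) n %/ p ^ k.
Proof.
move=> pp nM; have p_gt1 := prime_gt1 pp; rewrite logn_fact //.
set T := trunc_log p M.
have extend c : 0 < c -> c <= n.+1 + T.+1 -> n < p ^ c ->
    \sum_(1 <= k < c) n %/ p ^ k = \sum_(1 <= k < n.+1 + T.+1) n %/ p ^ k.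
  move=> c_gt0 c_le n_lt.
  by rewrite [RHS](big_cat_nat _ (n := c)) //= (@sum_divn_expn_eq0 p n c) ?addn0.
rewrite (extend n.+1) ?leq_addr //; last exact: ltnW (ltn_expl _ p_gt1).
apply/esym/extend; rewrite ?leq_addl //.
exact: leq_ltn_trans nM (trunc_log_ltn M p_gt1).
Qed.

Lemma logn_bin_double p x : prime p -> 0 < x ->
  logn p 'C(x.*2, x) <= trunc_log p x.*2.
Proof.
move=> pp x_gt0; rewrite -addnn; set T := trunc_log p (x + x).
have legendre : logn p (x + x)`! = logn p 'C(x + x, x) + (logn p x`! + logn p x`!).
  have := bin_fact (leq_addr x x); rewrite addnK => <-.
  by rewrite !lognM ?muln_gt0 ?fact_gt0 ?bin_gt0 ?leq_addr.
rewrite !(@logn_fact_trunc p _ (x + x)) ?leq_addr // -/T in legendre.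
have : \sum_(1 <= k < T.+1) (x + x) %/ p ^ k <=
       \sum_(1 <= k < T.+1) (x %/ p ^ k + x %/ p ^ k + 1).
  by apply: leq_sum => k _; apply: leq_divDl.
rewrite !big_split /= sum_nat_const_nat muln1 subn1; lia.
Qed.

Lemma expn_logn_bin_double p x : prime p -> 0 < x ->
  p ^ logn p 'C(x.*2, x) <= x.*2.
Proof.
move=> pp x_gt0; apply: leq_trans (trunc_logP (prime_gt1 pp) _); last first.
  by rewrite double_gt0.
by rewrite leq_exp2l ?prime_gt1 ?logn_bin_double.
Qed.

Definition primepi X := count prime (iota 0 X.+1).

Lemma expn2_leq_primepi x : 0 < x -> 2 ^ x <= x.*2 ^ primepi x.*2.
Proof.
move=> x_gt0; apply: leq_trans (expn2_leq_bin_double x) _.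
set C := 'C(x.*2, x).
have C_gt0 : 0 < C by rewrite bin_gt0 -addnn leq_addr.
have small_primes p : p \in primes C -> prime p /\ p <= x.*2.
  rewrite mem_primes => /and3P[pp _ p_dvd]; split=> //.
  have : p ^ 1 <= p ^ logn p C.
    by rewrite leq_exp2l ?prime_gt1 // logn_gt0 mem_primes pp C_gt0.
  by rewrite expn1 => /leq_trans; apply; apply: expn_logn_bin_double.
rewrite {1}(prod_prime_decomp C_gt0) prime_decompE big_map big_seq /=.
apply: leq_trans (leq_prod (E2 := fun=> x.*2) _) _.
  by move=> p /small_primes[pp _]; apply: expn_logn_bin_double.
rewrite -big_seq big_const_seq count_predT iter_muln_1 leq_pexp2l ?double_gt0 //.
rewrite /primepi -size_filter; apply: uniq_leq_size; first exact: primes_uniq.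
by move=> p /small_primes[pp p_le]; rewrite mem_filter pp mem_iota ltnS.
Qed.

Lemma primepi_exp2 m : 0 < m -> 2 ^ m.-1 <= m * primepi (2 ^ m).
Proof.
move=> m_gt0; have := @expn2_leq_primepi (2 ^ m.-1) (expn_gt0 2 m.-1).
by rewrite -mul2n -expnS prednK // -expnM leq_exp2l.
Qed.

Fixpoint trename (s : nat -> nat) (t : term) : term :=
  match t with
  | TVar i => TVar (s i)
  | TZero => TZero
  | TOne => TOne
  | TAdd a b => TAdd (trename s a) (trename s b)
  | TMul a b => TMul (trename s a) (trename s b)
  end.

Fixpoint frename (s : nat -> nat) (f : formula) : formula :=
  match f with
  | FEq a b => FEq (trename s a) (trename s b)
  | FNot g => FNot (frename s g)
  | FAnd g h => FAnd (frename s g) (frename s h)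
  | FOr g h => FOr (frename s g) (frename s h)
  | FImp g h => FImp (frename s g) (frename s h)
  | FEx x g => FEx (s x) (frename s g)
  | FAll x g => FAll (s x) (frename s g)
  end.

Fixpoint fvars_all (f : formula) : seq nat :=
  match f with
  | FEq a b => tvars a ++ tvars b
  | FNot g => fvars_all g
  | FAnd g h | FOr g h | FImp g h => fvars_all g ++ fvars_all h
  | FEx x g | FAll x g => x :: fvars_all g
  end.

Lemma teval_trename (M : Lstruct) (e : nat -> M) s t :
  teval e (trename s t) = teval (e \o s) t.
Proof. by elim: t => //= [a -> b ->|a -> b ->]. Qed.

Lemma eq_teval (M : Lstruct) (e e' : nat -> M) t : e =1 e' -> teval e t = teval e' t.
Proof. by move=> ee'; elim: t => //= [a -> b ->|a -> b ->]. Qed.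

Lemma eq_sat (M : Lstruct) f (e e' : nat -> M) : e =1 e' -> sat e f <-> sat e' f.
Proof.
elim: f e e' => /= [a b|g IH|g IHg h IHh|g IHg h IHh|g IHg h IHh|x g IH|x g IH] e e' ee'.
- by rewrite (eq_teval a ee') (eq_teval b ee').
- by rewrite (IH _ _ ee').
- by rewrite (IHg _ _ ee') (IHh _ _ ee').
- by rewrite (IHg _ _ ee') (IHh _ _ ee').
- by rewrite (IHg _ _ ee') (IHh _ _ ee').
- have upd_ee' v : upd e x v =1 upd e' x v by move=> i; rewrite /upd ee'.
  by split=> -[v /(IH _ _ (upd_ee' v)) sv]; exists v.
- have upd_ee' v : upd e x v =1 upd e' x v by move=> i; rewrite /upd ee'.
  by split=> sv v; apply/(IH _ _ (upd_ee' v)).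
Qed.

Lemma sat_frename (M : Lstruct) s f (e : nat -> M) : injective s ->
  sat e (frename s f) <-> sat (e \o s) f.
Proof.
move=> s_inj; elim: f e => /= [a b|g IH|g IHg h IHh|g IHg h IHh|g IHg h IHh|x g IH|x g IH] e.
- by rewrite !teval_trename.
- by rewrite IH.
- by rewrite IHg IHh.
- by rewrite IHg IHh.
- by rewrite IHg IHh.
- have upd_s v : upd e (s x) v \o s =1 upd (e \o s) x v.
    by move=> i; rewrite /upd /= (inj_eq s_inj).
  by split=> -[v sv]; exists v; move: sv; rewrite IH (eq_sat _ (upd_s v)).
- have upd_s v : upd e (s x) v \o s =1 upd (e \o s) x v.
    by move=> i; rewrite /upd /= (inj_eq s_inj).
  by split=> sv v; move: (sv v); rewrite IH (eq_sat _ (upd_s v)).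
Qed.

Lemma flen_frename s f : flen (frename s f) = flen f.
Proof.
have tlen_trename t : tlen (trename s t) = tlen t by elim: t => //= [a -> b ->|a -> b ->].
by elim: f => //= [a b|g ->|g -> h ->|g -> h ->|g -> h ->|x g ->|x g ->]; rewrite ?tlen_trename.
Qed.

Lemma fvars_all_frename s f : fvars_all (frename s f) = map s (fvars_all f).
Proof.
have tvars_trename t : tvars (trename s t) = map s (tvars t).
  by elim: t => //= [a -> b ->|a -> b ->]; rewrite map_cat.
by elim: f => /= [a b|g ->|g -> h ->|g -> h ->|g -> h ->|x g ->|x g ->];
  rewrite ?tvars_trename ?map_cat.
Qed.

Lemma size_fvars_all f : size (fvars_all f) <= flen f.
Proof.
have size_tvars t : size (tvars t) <= tlen t.
  by elim: t => //= [a ha b hb|a ha b hb]; rewrite size_cat; lia.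
elim: f => /= [a b|g|g hg h hh|g hg h hh|g hg h hh|x g|x g]; rewrite ?size_cat; try lia.
by have := size_tvars a; have := size_tvars b; lia.
Qed.

Lemma exists_frename_small_vars phi : exists psi,
  [/\ flen psi = flen phi, forall M, models M psi <-> models M phi
    & all (fun i => i < flen phi) (fvars_all psi)].
Proof.
set vs := undup (fvars_all phi); set n := flen phi.
pose s i := if i \in vs then index i vs else n + i.
have vs_small : size vs <= n by apply: leq_trans (size_undup _) (size_fvars_all _).
have s_inj : injective s.
  move=> i j; rewrite /s.
  case: ifP => hi; case: ifP => hj.
  - exact: index_inj.
  - by move=> e; have := index_mem i vs; rewrite hi e; lia.
  - by move=> e; have := index_mem j vs; rewrite hj -e; lia.
  - exact: addnI.
exists (frename s phi); split; first exact: flen_frename.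
  by move=> M; rewrite /models sat_frename.
rewrite fvars_all_frename all_map; apply/allP => i i_phi /=.
have i_vs : i \in vs by rewrite mem_undup.
by rewrite /s i_vs (leq_trans _ vs_small) // index_mem.
Qed.

Fixpoint tenc (t : term) : seq nat :=
  match t with
  | TVar i => [:: 12 + i]
  | TZero => [:: 0]
  | TOne => [:: 1]
  | TAdd a b => 2 :: tenc a ++ tenc b
  | TMul a b => 3 :: tenc a ++ tenc b
  end.

Fixpoint fenc (f : formula) : seq nat :=
  match f with
  | FEq a b => 4 :: tenc a ++ tenc b
  | FNot g => 5 :: fenc g
  | FAnd g h => 6 :: fenc g ++ fenc h
  | FOr g h => 7 :: fenc g ++ fenc h
  | FImp g h => 8 :: fenc g ++ fenc h
  | FEx x g => 9 :: (12 + x) :: fenc g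
  | FAll x g => 10 :: (12 + x) :: fenc g
  end.

Lemma tenc_cat_inj t t' s s' : tenc t ++ s = tenc t' ++ s' -> t = t' /\ s = s'.
Proof.
elim: t t' s s' => [i|||a IHa b IHb|a IHa b IHb] [j|||a' b'|a' b'] s s' //= [] //.
- by move=> /addnI -> ->.
- by rewrite -!catA => /IHa [-> /IHb [-> ->]].
- by rewrite -!catA => /IHa [-> /IHb [-> ->]].
Qed.

Lemma fenc_cat_inj f f' s s' : fenc f ++ s = fenc f' ++ s' -> f = f' /\ s = s'.
Proof.
elim: f f' s s' => [a b|g IH|g IH h IH'|g IH h IH'|g IH h IH'|x g IH|x g IH]
  [a' b'|g'|g' h'|g' h'|g' h'|x' g'|x' g'] s s' //= [] //;
  try (by rewrite -!catA => /tenc_cat_inj [-> /tenc_cat_inj [-> ->]]);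
  try (by rewrite -!catA => /IH [-> /IH' [-> ->]]);
  try (by move=> /IH [-> ->]);
  by move=> /addnI -> /IH [-> ->].
Qed.

Lemma fenc_inj : injective fenc.
Proof. by move=> f f' e; have [] := @fenc_cat_inj f f' [::] [::]; rewrite ?cats0. Qed.

Lemma size_fenc f : size (fenc f) = flen f.
Proof.
have size_tenc t : size (tenc t) = tlen t.
  by elim: t => //= [a ha b hb|a ha b hb]; rewrite size_cat ha hb.
by elim: f => /= [a b|g hg|g hg h hh|g hg h hh|g hg h hh|x g hg|x g hg];
  rewrite ?size_cat ?size_tenc ?hg ?hh.
Qed.

Lemma fenc_bounded B f : all (fun i => i < B) (fvars_all f) ->
  all (fun a => a < 12 + B) (fenc f).
Proof.
have tenc_bounded t : all (fun i => i < B) (tvars t) -> all (fun a => a < 12 + B) (tenc t).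
  elim: t => [i|||a ha b hb|a ha b hb] /=; rewrite ?all_cat ?andbT; try lia;
  by move=> /andP[/ha -> /hb ->].
elim: f => [a b|g hg|g hg h hh|g hg h hh|g hg h hh|x g hg|x g hg] /=; rewrite ?all_cat.
- by move=> /andP[/tenc_bounded -> /tenc_bounded ->].
- exact: hg.
- by move=> /andP[/hg -> /hh ->].
- by move=> /andP[/hg -> /hh ->].
- by move=> /andP[/hg -> /hh ->].
- by move=> /andP[x_lt /hg ->]; rewrite andbT; lia.
- by move=> /andP[x_lt /hg ->]; rewrite andbT; lia.
Qed.

Lemma filter_mkseq_nth (d L : nat) s : size s <= L -> d \notin s ->
  [seq x <- mkseq (nth d s) L | x != d] = s.
Proof.
move=> s_le d_s; rewrite -(subnKC s_le) /mkseq iotaD map_cat filter_cat.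
rewrite -/(mkseq _ _) mkseq_nth add0n.
have -> : map (nth d s) (iota (size s) (L - size s)) = nseq (L - size s) d.
  have /all_pred1P -> : all (pred1 d) (map (nth d s) (iota (size s) (L - size s))).
    apply/allP => x /mapP[i]; rewrite mem_iota => /andP[i_ge _] ->.
    by rewrite /= nth_default.
  by rewrite size_map size_iota.
rewrite filter_nseq eqxx /= cats0; apply/all_filterP/allP => x x_s.
by apply: contraNneq d_s => <-.
Qed.

(* A formula of length at most [L] with variables below [L], as a word of
   length [L] padded with the extra symbol [12 + L]. *)
Definition fcode L (f : formula) : {ffun 'I_L -> 'I_(12 + L).+1} :=
  [ffun i : 'I_L => inord (nth (12 + L) (fenc f) i)].

Lemma fcode_inj L f f' :
  flen f <= L -> all (fun i => i < L) (fvars_all f) ->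
  flen f' <= L -> all (fun i => i < L) (fvars_all f') ->
  fcode L f = fcode L f' -> f = f'.
Proof.
set d := 12 + L.
have word g : flen g <= L -> all (fun i => i < L) (fvars_all g) ->
    [seq x <- mkseq (nth d (fenc g)) L | x != d] = fenc g /\
    forall i, nth d (fenc g) i < d.+1.
  move=> g_len /fenc_bounded /allP g_vars; split.
    by rewrite filter_mkseq_nth ?size_fenc //; apply/negP => /g_vars; rewrite ltnn.
  move=> i; case: (ltnP i (size (fenc g))) => [i_lt|i_ge]; last by rewrite nth_default.
  exact/ltnW/g_vars/mem_nth.
move=> f_len f_vars f'_len f'_vars /ffunP codes; apply: fenc_inj.
have [ef nf] := word f f_len f_vars; have [ef' nf'] := word f' f'_len f'_vars.
rewrite -ef -ef'; congr filter; apply/eq_in_map => i; rewrite mem_iota => /andP[_ i_lt].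
by have := codes (Ordinal i_lt); rewrite !ffunE => /(congr1 val); rewrite /= !inordK.
Qed.

Lemma uniq_size_leq_card (A : eqType) (T : finType) (s : seq A) (R : A -> T -> Prop) :
  uniq s -> (forall a, a \in s -> exists c, R a c) ->
  (forall a b c, a \in s -> b \in s -> R a c -> R b c -> a = b) ->
  size s <= #|T|.
Proof.
case: s => [//|a0 s'] s_uniq R_total R_functional.
have [c0 _] := R_total a0 (mem_head a0 s').
pose f a := epsilon (inhabits c0) (R a).
have R_f a : a \in a0 :: s' -> R a (f a) by move=> /R_total; apply: epsilon_spec.
have f_inj : {in a0 :: s' &, injective f}.
  by move=> a b a_s b_s fab; apply: R_functional (R_f a a_s) _ => //; rewrite fab; apply: R_f.
rewrite -(size_map f) -(card_uniqP _) ?map_inj_in_uniq //; exact: max_card.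
Qed.

Lemma Liso_Fq_eq q q' : prime q -> prime q' ->
  Liso (Fq_struct q) (Fq_struct q') -> q = q'.
Proof.
move=> q_prime q'_prime [h [h_bij _]].
by have := bij_eq_card (T := 'F_q) (T' := 'F_q') h_bij; rewrite !card_Fp.
Qed.

Lemma size_described_primes L (s : seq nat) :
  uniq s -> all prime s ->
  (forall q, q \in s -> exists phi, [/\ describes phi (Fq_struct q),
     flen phi <= L & all (fun i => i < L) (fvars_all phi)]) ->
  size s <= (13 + L) ^ L.
Proof.
move=> s_uniq /allP s_prime s_described.
rewrite -[13 + L]card_ord -[L in _ ^ L]card_ord -card_ffun.
apply: (uniq_size_leq_card (R := fun q c => exists phi,
  [/\ describes phi (Fq_struct q), flen phi <= L,
      all (fun i => i < L) (fvars_all phi) & fcode L phi = c])) => //.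
  by move=> q /s_described[phi [d_phi len_phi vars_phi]]; exists (fcode L phi), phi.
move=> q q' c q_s q'_s [phi [[_ unique_phi] len_phi vars_phi <-]].
move=> [phi' [[models_phi' _] len_phi' vars_phi' e]].
apply/esym/Liso_Fq_eq; rewrite ?s_prime //; apply: unique_phi.
by rewrite (fcode_inj len_phi vars_phi len_phi' vars_phi' (esym e)); exact: models_phi'.
Qed.

Lemma primepi_leq_count_gt N X :
  primepi X <= N.+1 + count [pred q | prime q & N < q] (iota 0 X.+1).
Proof.
have split_at_N t :
    count prime t <= count [pred q | q <= N] t + count [pred q | prime q & N < q] t.
  by elim: t => //= q t IH; case: (prime q); case: (ltnP N q) => /=; lia.
apply: leq_trans (split_at_N _) _; rewrite leq_add2r -size_filter.
rewrite -[N.+1](size_iota 0); apply: uniq_leq_size; first by rewrite filter_uniq ?iota_uniq.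
by move=> q; rewrite mem_filter !mem_iota /= => /andP[q_le _]; rewrite ltnS.
Qed.

Lemma leq_exp2_of_mul_clog j n : n * clog n <= 2 ^ j * j.+1 -> n <= 2 ^ j.
Proof.
move=> n_small; rewrite leqNgt; apply/negP => j_lt_n.
have j_lt_clog : j < clog n.
  rewrite ltnNge; apply/negP => clog_le.
  have := leq_trans (up_logP n (isT : 1 < 2)) (leq_pexp2l (isT : 0 < 2) clog_le).
  by rewrite leqNgt j_lt_n.
by have := leq_mul j_lt_n j_lt_clog; rewrite mulSn; lia.
Qed.

Lemma exp2_gt_mul8 w : 6 <= w -> 8 * w < 2 ^ w.
Proof.
elim: w => // w IH; rewrite leq_eqVlt => /orP[/eqP <- //|w_ge].
by have := IH w_ge; rewrite expnS; lia.
Qed.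

Lemma expn_add_pow2_leq c j : c <= 2 ^ j -> (c + 2 ^ j) ^ 2 ^ j <= 2 ^ (2 ^ j * j.+1).
Proof.
by move=> c_le; rewrite mulnC expnM leq_exp2r ?expn_gt0 // expnS mul2n -addnn leq_add2r.
Qed.

Lemma mul_double_lt_exp2 w P : 6 <= w -> P <= 2 * 2 ^ w -> w.*2 * P < 2 ^ (w.*2).-1.
Proof.
move=> w_ge P_le.
have -> : 2 ^ (w.*2).-1 = 2 ^ w.-1 * 2 ^ w by rewrite -expnD; congr (2 ^ _); lia.
have split_w : 2 ^ w = 2 * 2 ^ w.-1 by rewrite -expnS prednK // (leq_trans _ w_ge).
have := exp2_gt_mul8 w_ge; rewrite split_w in P_le * => w_small.
have : 0 < 2 ^ w.-1 by rewrite expn_gt0.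
move: (2 ^ w.-1) P_le w_small => A P_le w_small A_gt0; nia.
Qed.

Lemma many_primes_above N j : N + 4 <= j ->
  (13 + 2 ^ j) ^ 2 ^ j < count [pred q | prime q & N < q] (iota 0 (2 ^ (2 ^ j * j.+1).*2).+1).
Proof.
move=> j_ge; set L := 2 ^ j; set w := L * j.+1; set c := count _ _.
have L_ge : 2 ^ 4 <= L by rewrite leq_exp2l // (leq_trans _ j_ge) ?leq_addl.
have L_le_w : L <= w by rewrite leq_pmulr.
have w_ge : 6 <= w by apply: leq_trans L_le_w; apply: leq_trans L_ge.
have N_small : N.+1 <= 2 ^ w.
  apply: leq_trans (ltnW (ltn_expl w (isT : 1 < 2))).
  by have := ltn_expl j (isT : 1 < 2); rewrite -/L; lia.
rewrite ltnNge; apply/negP => c_small.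
suff : w.*2 * primepi (2 ^ w.*2) < 2 ^ (w.*2).-1.
  by rewrite ltnNge primepi_exp2 // double_gt0 (leq_trans _ w_ge).
apply: leq_ltn_trans (mul_double_lt_exp2 (P := N.+1 + c) w_ge _).
  by rewrite leq_mul2l primepi_leq_count_gt orbT.
rewrite mul2n -addnn leq_add // (leq_trans c_small) // expn_add_pow2_leq //.
exact: leq_trans L_ge.
Qed.

Lemma short_normal_description q j phi :
  q <= 2 ^ (2 ^ j * j.+1).*2 -> describes phi (Fq_struct q) ->
  2 * (flen phi * clog (flen phi)) < clog q ->
  exists psi, [/\ describes psi (Fq_struct q), flen psi <= 2 ^ j
                & all (fun i => i < 2 ^ j) (fvars_all psi)].
Proof.
move=> q_le [m_phi u_phi] long.
have [psi [len_psi equiv vars_psi]] := exists_frename_small_vars phi.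
have phi_short : flen phi <= 2 ^ j.
  by apply: leq_exp2_of_mul_clog; have := up_log_min (isT : 1 < 2) q_le; rewrite -/(clog q); lia.
exists psi; split.
- by split=> [|M /equiv/u_phi]; first exact/equiv.
- by rewrite len_psi.
- by apply: sub_all vars_psi => i /leq_trans; apply.
Qed.

Theorem proposition4p3 :
  exists k : rat, (0 < k)%R /\
    forall N : nat, exists q : nat, N < q /\ prime q /\
      forall phi : formula, sentence phi -> describes phi (Fq_struct q) ->
        ((clog q)%:R <= k * ((flen phi * clog (flen phi))%:R : rat))%R.
Proof.
exists 2%:R%R; split=> // N; apply: NNPP => no_good_prime.
have long_description q : N < q -> prime q -> exists phi,
    describes phi (Fq_struct q) /\ 2 * (flen phi * clog (flen phi)) < clog q.
  move=> N_lt q_prime; apply: NNPP => no_long; apply: no_good_prime.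
  exists q; do 2!split=> //; move=> phi _ d_phi.
  by rewrite -natrM ler_nat leqNgt; apply/negP => long; apply: no_long; exists phi.
have := many_primes_above (leqnn (N + 4)).
rewrite -size_filter ltnNge => /negP; apply.
apply: size_described_primes; first by rewrite filter_uniq ?iota_uniq.
  by apply/allP => q; rewrite mem_filter => /andP[/andP[]].
move=> q; rewrite mem_filter mem_iota add0n ltnS => /andP[/andP[q_prime N_lt] /andP[_ q_le]].
have [phi [d_phi long]] := long_description q N_lt q_prime.
exact: short_normal_description q_le d_phi long.
Qed.
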